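(* For every integer $p\ge 0$, the edge set of $K_{4p+1,4p+1,4p+1}\times K_2$ can be partitioned into $2p+1$ planar subgraphs; in particular $\theta(K_{4p+1,4p+1,4p+1}\times K_2)\le 2p+1$.
   Context: The thickness $\theta(G)$ of a graph $G$ is the minimum number of planar subgraphs whose union is $G$. The Kronecker product $G\times H$ of graphs $G$ and $H$ is the graph with vertex set $V(G)\times V(H)$ in which $(g,h)$ and $(g',h')$ are adjacent if and only if $gg'\in E(G)$ and $hh'\in E(H)$. $K_{n,n,n}$ denotes the complete tripartite graph with three parts of size $n$. *)

From Stdlib Require Import Reals Arith.
Open Scope R_scope.

Definition pt := (R * R)%type.

Definition dist2 (p q : pt) : R :=
  sqrt ((fst p - fst q) ^ 2 + (snd p - snd q) ^ 2).

Definition cont01 (f : R -> pt) : Prop :=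
  forall t, 0 <= t <= 1 -> forall eps, 0 < eps -> exists delta, 0 < delta /\
    forall s, 0 <= s <= 1 -> Rabs (s - t) < delta -> dist2 (f s) (f t) < eps.

Definition inj01 (f : R -> pt) : Prop :=
  forall s t, 0 <= s <= 1 -> 0 <= t <= 1 -> f s = f t -> s = t.

Definition planar {V : Type} (E : V -> V -> Prop) : Prop :=
  exists (pos : V -> pt) (arc : V -> V -> R -> pt),
    (forall u v, pos u = pos v -> u = v) /\
    (forall u v, E u v ->
       cont01 (arc u v) /\ inj01 (arc u v) /\
       arc u v 0 = pos u /\ arc u v 1 = pos v /\
       (forall t w, 0 < t < 1 -> arc u v t <> pos w)) /\
    (forall u v u' v', E u v -> E u' v' ->
       ~ ((u = u' /\ v = v') \/ (u = v' /\ v = u')) ->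
       forall t t', 0 < t < 1 -> 0 < t' < 1 -> arc u v t <> arc u' v' t').

(* Vertices of K_{n,n,n} x K_2: (part i < 3, index a < n, side s : bool). *)
Definition vert (n : nat) : Type :=
  { x : nat * nat * bool | (fst (fst x) < 3 /\ snd (fst x) < n)%nat }.

(* Kronecker product adjacency: parts differ (edge of K_{n,n,n}) and
   sides differ (edge of K_2). *)
Definition KnnnK2_adj (n : nat) (x y : vert n) : Prop :=
  fst (fst (proj1_sig x)) <> fst (fst (proj1_sig y)) /\
  snd (proj1_sig x) <> snd (proj1_sig y).

(* Colour the edge joining index e on side [false] to index o on side [true] by the difference
   o - e modulo 4p+1, two consecutive differences per colour.  Within one colour the indices can
   be relabelled by levels so that every edge climbs by at most one level; since the parts and
   sides form the 6-cycle K_3 x K_2, each colour class then embeds in a strip of six rows of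
   levels, with edges only between cyclically consecutive rows.  Visiting the strip in a zigzag
   order gives a two-page book embedding, and a two-page book embedding is drawn in the plane
   with parabolic arcs above and below the spine. *)

From Stdlib Require Import Reals Arith Lia Lra Psatz ProofIrrelevance.

Open Scope R_scope.

Definition page_sign (s : bool) : R := if s then 1 else -1.

Definition parabola_arc (a b : R) (s : bool) (t : R) : pt :=
  (a + (b - a) * t, page_sign s * ((a + (b - a) * t - a) * (b - (a + (b - a) * t)))).

Lemma parabola_arc_swap a b s t : parabola_arc a b s t = parabola_arc b a s (1 - t).
Proof. unfold parabola_arc; f_equal; ring. Qed.

Lemma parabola_height_pos a b t : a <> b -> 0 < t < 1 ->
  0 < (a + (b - a) * t - a) * (b - (a + (b - a) * t)).
Proof.
  intros Hab Ht.
  replace ((a + (b - a) * t - a) * (b - (a + (b - a) * t)))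
    with ((b - a) * (b - a) * (t * (1 - t))) by ring.
  assert (b - a <> 0) by lra.
  apply Rmult_lt_0_compat; nra.
Qed.

Lemma lipschitz_cont01 (f : R -> pt) (L : R) : 0 <= L ->
  (forall s t, 0 <= s <= 1 -> 0 <= t <= 1 -> dist2 (f s) (f t) <= L * Rabs (s - t)) ->
  cont01 f.
Proof.
  intros HL Hf t Ht eps Heps.
  exists (eps / (L + 1)); split; [apply Rdiv_lt_0_compat; lra|].
  intros s Hs Hst.
  apply (Rle_lt_trans _ _ _ (Hf s t Hs Ht)).
  apply (Rle_lt_trans _ ((L + 1) * Rabs (s - t))); [pose proof (Rabs_pos (s - t)); nra|].
  apply (Rmult_lt_compat_l (L + 1)) in Hst; [|lra].
  replace ((L + 1) * (eps / (L + 1))) with eps in Hst by (field; lra).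
  exact Hst.
Qed.

Lemma parabola_arc_lipschitz a b s u t : 0 <= u <= 1 -> 0 <= t <= 1 ->
  dist2 (parabola_arc a b s u) (parabola_arc a b s t) <= (1 + (b - a) ^ 2) * Rabs (u - t).
Proof.
  intros Hu Ht. unfold dist2, parabola_arc; cbn [fst snd].
  replace ((a + (b - a) * u - (a + (b - a) * t)) ^ 2 +
     (page_sign s * ((a + (b - a) * u - a) * (b - (a + (b - a) * u))) -
      page_sign s * ((a + (b - a) * t - a) * (b - (a + (b - a) * t)))) ^ 2)
    with ((u - t) ^ 2 * ((b - a) ^ 2 + (b - a) ^ 4 * (1 - u - t) ^ 2))
    by (destruct s; simpl; ring).
  set (D := b - a).
  assert (HD : 0 <= D ^ 2) by apply pow2_ge_0.
  assert (HL : 0 <= (1 + D ^ 2) * Rabs (u - t)) by (apply Rmult_le_pos; [lra|apply Rabs_pos]).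
  rewrite <- (sqrt_pow2 _ HL). apply sqrt_le_1_alt.
  rewrite Rpow_mult_distr, pow2_abs, (Rmult_comm ((1 + D ^ 2) ^ 2)).
  apply Rmult_le_compat_l; [apply pow2_ge_0|].
  assert (Hw : (1 - u - t) ^ 2 <= 1) by (assert (-1 <= 1 - u - t <= 1) by lra; nra).
  assert (D ^ 4 * (1 - u - t) ^ 2 <= D ^ 4).
  { replace (D ^ 4) with ((D ^ 2) ^ 2) by ring.
    rewrite <- (Rmult_1_r ((D ^ 2) ^ 2)) at 2.
    apply Rmult_le_compat_l; [apply pow2_ge_0|exact Hw]. }
  replace ((1 + D ^ 2) ^ 2) with (1 + D ^ 2 + D ^ 2 + D ^ 4) by ring.
  lra.
Qed.

Lemma parabola_arc_cont01 a b s : cont01 (parabola_arc a b s).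
Proof.
  apply (lipschitz_cont01 _ (1 + (b - a) ^ 2)); [pose proof (pow2_ge_0 (b - a)); lra|].
  apply parabola_arc_lipschitz.
Qed.

(* Two parabolas over nested or disjoint segments on the same side of the axis can only meet on
   the axis: where they overlap, the inner one lies strictly below the outer one. *)
Lemma parabola_arcs_disjoint_ordered (a b c d : R) s t t' : a < b -> c < d ->
  0 < t < 1 -> 0 < t' < 1 ->
  b <= c \/ d <= a \/ (a <= c /\ d <= b /\ (a < c \/ d < b)) \/ (c <= a /\ b <= d /\ (c < a \/ b < d)) ->
  parabola_arc a b s t <> parabola_arc c d s t'.
Proof.
  intros Hab Hcd Ht Ht' Hcase Heq. unfold parabola_arc in Heq.
  injection Heq as Hx Hy.
  set (X := a + (b - a) * t) in *.
  set (X' := c + (d - c) * t') in *.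
  assert (a < X < b) by (unfold X; nra).
  assert (c < X' < d) by (unfold X'; nra).
  rewrite <- Hx in *.
  assert (Hh : (X - a) * (b - X) = (X - c) * (d - X)) by (destruct s; simpl in Hy; lra).
  destruct Hcase as [?|[?|[[? [? [?|?]]]|[? [? [?|?]]]]]]; nra.
Qed.

Close Scope R_scope.

Definition crossing (a b c d : nat) : Prop :=
  (Nat.min a b < Nat.min c d < Nat.max a b /\ Nat.max a b < Nat.max c d) \/
  (Nat.min c d < Nat.min a b < Nat.max c d /\ Nat.max c d < Nat.max a b).

Lemma parabola_arcs_disjoint_sorted (a b c d : nat) s t t' : a < b -> c < d ->
  (0 < t < 1)%R -> (0 < t' < 1)%R ->
  ~ ((a = c /\ b = d) \/ (a = d /\ b = c)) -> ~ crossing a b c d ->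
  parabola_arc (INR a) (INR b) s t <> parabola_arc (INR c) (INR d) s t'.
Proof.
  intros Hab Hcd Ht Ht' Hsame Hcross.
  assert (Hcase : b <= c \/ d <= a \/ (a <= c /\ d <= b /\ (a < c \/ d < b)) \/
                  (c <= a /\ b <= d /\ (c < a \/ b < d))) by (unfold crossing in *; lia).
  apply parabola_arcs_disjoint_ordered; try (apply lt_INR; assumption); try assumption.
  destruct Hcase as [?|[?|[[? [? [?|?]]]|[? [? [?|?]]]]]];
    [left | right; left | right; right; left | right; right; left | right; right; right | right; right; right];
    repeat split; auto using le_INR, lt_INR.
Qed.

Lemma parabola_arcs_disjoint (a b c d : nat) s s' t t' : a <> b -> c <> d ->
  (0 < t < 1)%R -> (0 < t' < 1)%R ->
  ~ ((a = c /\ b = d) \/ (a = d /\ b = c)) -> (s = s' -> ~ crossing a b c d) ->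
  parabola_arc (INR a) (INR b) s t <> parabola_arc (INR c) (INR d) s' t'.
Proof.
  intros Hab Hcd Ht Ht' Hsame Hcross.
  destruct (Bool.bool_dec s s') as [<-|Hss].
  - specialize (Hcross eq_refl).
    assert (Hs : (0 < 1 - t < 1)%R /\ (0 < 1 - t' < 1)%R) by lra.
    destruct (Nat.lt_total a b) as [Hab'|[?|Hab']]; [|contradiction|rewrite (parabola_arc_swap (INR a))];
    (destruct (Nat.lt_total c d) as [Hcd'|[?|Hcd']]; [|contradiction|rewrite (parabola_arc_swap (INR c))]);
    apply parabola_arcs_disjoint_sorted; unfold crossing in *; tauto || lia.
  - intro Heq. unfold parabola_arc in Heq. injection Heq as _ Hy.
    assert (INR a <> INR b) by (intro E; apply INR_eq in E; contradiction).
    assert (INR c <> INR d) by (intro E; apply INR_eq in E; contradiction).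
    pose proof (parabola_height_pos (INR a) (INR b) t ltac:(assumption) Ht).
    pose proof (parabola_height_pos (INR c) (INR d) t' ltac:(assumption) Ht').
    destruct s, s'; try congruence; simpl in Hy; lra.
Qed.

Definition book_drawing {V : Type} (E : V -> V -> Prop) (x : V -> nat) (page : V -> V -> bool) : Prop :=
  (forall u v, E u v -> u <> v) /\
  (forall u v u' v', E u v -> E u' v' -> page u v = page u' v' ->
     ~ crossing (x u) (x v) (x u') (x v')).

Lemma book_drawing_comap {V W : Type} (E : V -> V -> Prop) (F : W -> W -> Prop) (f : V -> W)
    (x : W -> nat) (page : W -> W -> bool) :
  (forall u v, E u v -> F (f u) (f v)) -> book_drawing F x page ->
  book_drawing E (fun u => x (f u)) (fun u v => page (f u) (f v)).
Proof.
  intros Hf [Hirr Hcross]. split.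
  - intros u v Huv ->. exact (Hirr _ _ (Hf _ _ Huv) eq_refl).
  - intros u v u' v' Huv Hu'v'. apply Hcross; apply Hf; assumption.
Qed.

Lemma book_drawing_planar {V : Type} (E : V -> V -> Prop) (x : V -> nat) (page : V -> V -> bool) :
  (forall u v, x u = x v -> u = v) -> book_drawing E x page -> planar E.
Proof.
  intros Hx [Hirr Hcross].
  exists (fun u => (INR (x u), 0%R)), (fun u v => parabola_arc (INR (x u)) (INR (x v)) (page u v)).
  assert (Hne : forall u v, E u v -> INR (x u) <> INR (x v)).
  { intros u v Huv H. apply INR_eq, Hx in H. exact (Hirr u v Huv H). }
  split; [|split].
  - intros u v H. injection H as H. apply Hx, INR_eq, H.
  - intros u v Huv. split; [apply parabola_arc_cont01|].
    unfold parabola_arc. repeat split.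
    + intros t t' _ _ H. injection H as H _.
      assert (Ht : ((INR (x v) - INR (x u)) * (t - t') = 0)%R) by lra.
      apply Rmult_integral in Ht. pose proof (Hne u v Huv). destruct Ht; lra.
    + f_equal; ring.
    + f_equal; ring.
    + intros t w Ht H. injection H as _ Hy.
      pose proof (parabola_height_pos _ _ t (Hne u v Huv) Ht).
      destruct (page u v); simpl in Hy; lra.
  - intros u v u' v' Huv Hu'v' Hsame t t' Ht Ht'.
    apply parabola_arcs_disjoint; auto.
    + intro H. exact (Hirr u v Huv (Hx _ _ H)).
    + intro H. exact (Hirr u' v' Hu'v' (Hx _ _ H)).
    + intros [[H1 H2]|[H1 H2]]; apply Hsame; [left|right]; split; apply Hx; assumption.
Qed.

(* Vertices (r, l) of the strip have a row r < 6 and a level l < n; the rows form the 6-cycle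
   0-1-2-3-4-5-0. *)
Definition strip_edge (n r l r' l' : nat) : Prop :=
  ((r = 0 /\ (r' = 1 \/ r' = 5)) \/ (r = 2 /\ (r' = 1 \/ r' = 3)) \/ (r = 4 /\ (r' = 3 \/ r' = 5))) /\
  (l' = l \/ l' = S l) /\ l' < n.

Definition strip_adj (n : nat) (x y : nat * nat) : Prop :=
  strip_edge n (fst x) (snd x) (fst y) (snd y) \/ strip_edge n (fst y) (snd y) (fst x) (snd x).

(* Rows 1, ..., 5 are laid out level by level, alternately forwards and backwards; row 0
   comes last, in decreasing order of level. *)
Definition strip_pos (n : nat) (x : nat * nat) : nat :=
  if fst x =? 0 then 5 * n + (n - 1 - snd x)
  else if Nat.even (snd x) then 5 * snd x + (fst x - 1) else 5 * snd x + (5 - fst x).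

Definition strip_edge_page (r l r' : nat) : bool := if r =? 0 then r' =? 1 else Nat.even l.

Definition strip_page (x y : nat * nat) : bool :=
  if Nat.even (fst x) then strip_edge_page (fst x) (snd x) (fst y)
  else strip_edge_page (fst y) (snd y) (fst x).

Ltac case_parity l :=
  let a := fresh "a" in destruct (Nat.Even_or_Odd l) as [[a ->]|[a ->]];
  rewrite ?Nat.even_succ, ?Nat.odd_even, ?Nat.odd_odd, ?Nat.even_even, ?Nat.even_odd in *.

Lemma strip_edge_noncrossing n r l r' l' s m s' m' :
  strip_edge n r l r' l' -> strip_edge n s m s' m' -> strip_edge_page r l r' = strip_edge_page s m s' ->
  ~ crossing (strip_pos n (r, l)) (strip_pos n (r', l')) (strip_pos n (s, m)) (strip_pos n (s', m')).
Proof.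
  intros [Hr [Hl Hn]] [Hs [Hm Hn']] Hp.
  unfold crossing, strip_pos, strip_edge_page in *; cbn [fst snd] in *.
  destruct Hl as [-> | ->]; destruct Hm as [-> | ->]; case_parity l; case_parity m;
  destruct Hr as [[-> [-> | ->]]|[[-> [-> | ->]]|[-> [-> | ->]]]];
  destruct Hs as [[-> [-> | ->]]|[[-> [-> | ->]]|[-> [-> | ->]]]];
  cbn [Nat.eqb] in *; try discriminate; lia.
Qed.

Lemma strip_pos_inj n x y : fst x < 6 -> fst y < 6 -> snd x < n -> snd y < n ->
  strip_pos n x = strip_pos n y -> x = y.
Proof.
  destruct x as [r l], y as [r' l']; cbn [fst snd]. intros Hr Hr' Hl Hl' H.
  unfold strip_pos in H; cbn [fst snd] in H.
  case_parity l; case_parity l';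
  (destruct r as [|[|[|[|[|[|r]]]]]]; [..|lia]);
  (destruct r' as [|[|[|[|[|[|r']]]]]]; [..|lia]);
  cbn [Nat.eqb] in H; f_equal; lia.
Qed.

Lemma strip_edge_rows n r l r' l' : strip_edge n r l r' l' -> Nat.even r = true /\ Nat.even r' = false.
Proof. intros [H _]. destruct H as [[-> [-> | ->]]|[[-> [-> | ->]]|[-> [-> | ->]]]]; auto. Qed.

Lemma strip_book_drawing n : book_drawing (strip_adj n) (strip_pos n) strip_page.
Proof.
  split.
  - intros x y Hxy ->. destruct Hxy as [H|H]; apply strip_edge_rows in H; destruct H; congruence.
  - intros [r l] [r' l'] [s m] [s' m']; unfold strip_adj, strip_page; cbn [fst snd].
    intros [H1|H1] [H2|H2];
    destruct (strip_edge_rows _ _ _ _ _ H1) as [E1 E1'], (strip_edge_rows _ _ _ _ _ H2) as [E2 E2'];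
    rewrite ?E1, ?E1', ?E2, ?E2'; intro Hp; pose proof (strip_edge_noncrossing _ _ _ _ _ _ _ _ _ H1 H2 Hp);
    unfold crossing in *; lia.
Qed.

Ltac case_nat_tests :=
  repeat match goal with
  | |- context [if ?b then _ else _] => let E := fresh "E" in destruct b eqn:E
  | _ : context [if ?b then _ else _] |- _ => let E := fresh "E" in destruct b eqn:E
  end;
  repeat match goal with
  | H : (_ <=? _) = true |- _ => apply Nat.leb_le in H
  | H : (_ <=? _) = false |- _ => apply Nat.leb_gt in H
  | H : (_ <? _) = true |- _ => apply Nat.ltb_lt in H
  | H : (_ <? _) = false |- _ => apply Nat.ltb_ge in H
  | H : (_ =? _) = true |- _ => apply Nat.eqb_eq in H
  | H : (_ =? _) = false |- _ => apply Nat.eqb_neq in H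
  end.

Ltac name_halves x :=
  pose proof (Nat.div_mod_eq x 2); pose proof (Nat.mod_upper_bound x 2 ltac:(lia));
  set (x / 2) in *; set (x mod 2) in *.

Ltac split_halves :=
  repeat match goal with
  | H : context [?x / 2] |- _ => name_halves x
  | |- context [?x / 2] => name_halves x
  | H : context [?x mod 2] |- _ => name_halves x
  | |- context [?x mod 2] => name_halves x
  end.

Definition diff_mod (p e o : nat) : nat := if e <=? o then o - e else o + (4 * p + 1) - e.

(* Differences 2k+1 and 2k+2 get colour k < 2p, except that the difference-(2k+2) edges whose
   levels would wrap around join the difference-0 edges in colour 2p. *)
Definition colour (p e o : nat) : nat :=
  if diff_mod p e o =? 0 then 2 * p
  else if diff_mod p e o mod 2 =? 1 then (diff_mod p e o - 1) / 2
  else if e + diff_mod p e o / 2 =? 4 * p + 1 then 2 * p else diff_mod p e o / 2 - 1.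

(* For k < 2p the level is the index shifted by k on side [false] and by -(k+1) on side [true],
   modulo 4p+1; colour 2p lists the indices in the order 0, 4p, 1, 4p-1, 2, ..., in which a
   and 4p+1-a are adjacent. *)
Definition level (p k : nat) (s : bool) (i : nat) : nat :=
  if k <? 2 * p then
    (if s then (if k + 1 <=? i then i - (k + 1) else i + (4 * p + 1) - (k + 1))
     else (if i + k <? 4 * p + 1 then i + k else i + k - (4 * p + 1)))
  else (if i =? 0 then 0 else if i <=? 2 * p then 2 * i else 2 * (4 * p + 1 - i) - 1).

Lemma colour_lt p e o : e < 4 * p + 1 -> o < 4 * p + 1 -> colour p e o < 2 * p + 1.
Proof. intros. unfold colour, diff_mod. case_nat_tests; split_halves; lia. Qed.

Lemma level_lt p k s i : i < 4 * p + 1 -> level p k s i < 4 * p + 1.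
Proof. intros. unfold level. destruct s; case_nat_tests; lia. Qed.

Lemma level_inj p k s i j : i < 4 * p + 1 -> j < 4 * p + 1 -> level p k s i = level p k s j -> i = j.
Proof. intros. unfold level in *. destruct s; case_nat_tests; lia. Qed.

Lemma level_step p e o : e < 4 * p + 1 -> o < 4 * p + 1 ->
  level p (colour p e o) true o = level p (colour p e o) false e \/
  level p (colour p e o) true o = S (level p (colour p e o) false e).
Proof. intros. unfold colour, diff_mod, level. case_nat_tests; split_halves; lia. Qed.

Definition vert_part {n : nat} (u : vert n) : nat := fst (fst (proj1_sig u)).
Definition vert_index {n : nat} (u : vert n) : nat := snd (fst (proj1_sig u)).
Definition vert_side {n : nat} (u : vert n) : bool := snd (proj1_sig u).

(* Parts and sides form the 6-cycle K_3 x K_2; [row] numbers it consecutively. *)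
Definition row (i : nat) (s : bool) : nat :=
  if s then (if i =? 0 then 3 else if i =? 1 then 5 else 1) else 2 * i.

Definition edge_colour (p : nat) (u v : vert (4 * p + 1)) : nat :=
  if vert_side u then colour p (vert_index v) (vert_index u)
  else colour p (vert_index u) (vert_index v).

Definition cell (p k : nat) (u : vert (4 * p + 1)) : nat * nat :=
  (row (vert_part u) (vert_side u), level p k (vert_side u) (vert_index u)).

Lemma edge_colour_spec p (u v : vert (4 * p + 1)) : KnnnK2_adj (4 * p + 1) u v ->
  edge_colour p u v < 2 * p + 1 /\ edge_colour p u v = edge_colour p v u.
Proof.
  destruct u as [[[i a] s] [Hi Ha]], v as [[[j b] s'] [Hj Hb]].
  unfold KnnnK2_adj, edge_colour, vert_index, vert_side; cbn in *. intros [_ Hs].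
  destruct s, s'; try congruence; split; auto using colour_lt.
Qed.

Lemma strip_edge_cells p i j a b : i < 3 -> j < 3 -> i <> j -> a < 4 * p + 1 -> b < 4 * p + 1 ->
  strip_edge (4 * p + 1) (row i false) (level p (colour p a b) false a)
                         (row j true) (level p (colour p a b) true b).
Proof.
  intros Hi Hj Hij Ha Hb. split; [|split].
  - unfold row. destruct i as [|[|[|i]]]; destruct j as [|[|[|j]]]; cbn [Nat.eqb]; lia.
  - apply level_step; assumption.
  - apply level_lt; assumption.
Qed.

Lemma colour_class_in_strip p k (u v : vert (4 * p + 1)) :
  KnnnK2_adj (4 * p + 1) u v -> edge_colour p u v = k -> strip_adj (4 * p + 1) (cell p k u) (cell p k v).
Proof.
  destruct u as [[[i a] s] [Hi Ha]], v as [[[j b] s'] [Hj Hb]].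
  unfold KnnnK2_adj, edge_colour, cell, strip_adj, vert_part, vert_index, vert_side; cbn in *.
  intros [Hij Hs] <-.
  destruct s, s'; try congruence; [right|left]; apply strip_edge_cells; auto.
Qed.

Lemma cell_bounds p k (u : vert (4 * p + 1)) : fst (cell p k u) < 6 /\ snd (cell p k u) < 4 * p + 1.
Proof.
  destruct u as [[[i a] s] [Hi Ha]]. unfold cell, row, vert_part, vert_index, vert_side; cbn in *.
  split; [destruct s; case_nat_tests; lia|apply level_lt, Ha].
Qed.

Lemma cell_inj p k (u v : vert (4 * p + 1)) : cell p k u = cell p k v -> u = v.
Proof.
  destruct u as [[[i a] s] [Hi Ha]], v as [[[j b] s'] [Hj Hb]].
  unfold cell, vert_part, vert_index, vert_side; cbn in *. intros Hcell. injection Hcell as Hrow Hlev.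
  assert (s = s' /\ i = j) as [<- <-].
  { unfold row in Hrow. destruct s, s'; destruct i as [|[|[|i]]]; destruct j as [|[|[|j]]];
    cbn [Nat.eqb] in Hrow; auto; lia. }
  apply level_inj in Hlev; auto. subst b.
  f_equal. apply proof_irrelevance.
Qed.

Theorem lemma4p4 (p : nat) :
  exists c : vert (4 * p + 1) -> vert (4 * p + 1) -> nat,
    (forall u v, KnnnK2_adj (4 * p + 1) u v ->
       (c u v < 2 * p + 1)%nat /\ c u v = c v u) /\
    (forall k, (k < 2 * p + 1)%nat ->
       planar (fun u v => KnnnK2_adj (4 * p + 1) u v /\ c u v = k)).
Proof.
  exists (edge_colour p). split; [exact (edge_colour_spec p)|].
  intros k _.
  apply (book_drawing_planar _ (fun u => strip_pos (4 * p + 1) (cell p k u))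
           (fun u v => strip_page (cell p k u) (cell p k v))).
  - intros u v Hpos. apply (cell_inj p k).
    destruct (cell_bounds p k u), (cell_bounds p k v).
    apply (strip_pos_inj (4 * p + 1)); assumption.
  - apply (book_drawing_comap _ (strip_adj (4 * p + 1))); [|apply strip_book_drawing].
    intros u v [Huv <-]. apply colour_class_in_strip; auto.
Qed.
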